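(* Let $G=(U\cup W,E)$ be a finite bipartite graph with bipartition $(U,W)$ and let $\mathbf{I}^Y\in\{0,1\}^{\vec E}$ be defined by $I^Y_{\vec e}=1$ iff $\lim_{z\to\infty}Y_{\vec e}(z)=\infty$. Then the set $V(\mathbf{I}^Y)$ is a minimum vertex cover of $G$.
   Context: $\vec E$ denotes the directed edges, $\partial v$ the neighbours of $v$, empty sums are $0$. LABP: $m^0_{\vec e}(z)=0$, $m^{t+1}_{u\to v}(z)=z/(1+\sum_{w\in\partial u\setminus v}m^t_{w\to u}(z))$; $Y_{\vec e}(z)=\lim_t m^t_{\vec e}(z)$, which is non-decreasing in $z$. The map $\mathcal{P}_G:\{0,1\}^{\vec E}\to\{0,1\}^{\vec E}$ is $\mathcal{P}_G(\mathbf{I})_{u\to v}=\mathbf{1}(\sum_{w\in\partial u\setminus v}I_{w\to u}=0)$. For $\mathbf{I}\in\{0,1\}^{\vec E}$, the vertex set $V(\mathbf{I})$ is defined by: for $u\in U$, $u\in V(\mathbf{I})$ iff $\sum_{v\in\partial u}I_{v\to u}\ge1$; for $w\in W$, $w\in V(\mathbf{I})$ iff $\sum_{v\in\partial w}\mathcal{P}_G(\mathbf{I})_{v\to w}\ge2$. *)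

From mathcomp Require Import all_boot.
From Stdlib Require Import Reals.

Set Implicit Arguments.
Unset Strict Implicit.
Unset Printing Implicit Defensive.

(* A finite graph on vertex type T is given by a symmetric relation adj;
   directed edges are the pairs (u,v) with adj u v.  Messages are
   represented as functions T -> T -> R (only values on directed edges
   matter). *)

(* LABP iteration: labp adj z t u v = m^t_{u->v}(z),
   m^0 = 0,  m^{t+1}_{u->v}(z) = z / (1 + sum_{w in du \ v} m^t_{w->u}(z)). *)
Fixpoint labp (T : finType) (adj : rel T) (z : R) (t : nat) (u v : T) : R :=
  match t with
  | O => 0%R
  | S t' =>
      (z / (1 + \big[Rplus/0%R]_(w : T | adj w u && (w != v)) labp adj z t' w u))%R
  end.

Definition tends_to_infty (f : R -> R) : Prop :=
  forall M : R, exists z0 : R, forall z : R, (z0 <= z)%R -> (M <= f z)%R.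

Definition PG (T : finType) (adj : rel T) (I : T -> T -> bool) (u v : T) : bool :=
  (\sum_(w : T | adj w u && (w != v)) (I w u : nat) == 0)%N.

(* The vertex set V(I); inU is the indicator of the side U, W = its complement. *)
Definition Vset (T : finType) (adj : rel T) (inU : pred T) (I : T -> T -> bool)
  : {set T} :=
  [set x : T | if inU x
               then (1 <= \sum_(v : T | adj v x) (I v x : nat))%N
               else (2 <= \sum_(v : T | adj v x) (PG adj I v x : nat))%N].

Definition vertex_cover (T : finType) (adj : rel T) (C : {set T}) : Prop :=
  forall x y : T, adj x y -> (x \in C) || (y \in C).

Definition min_vertex_cover (T : finType) (adj : rel T) (C : {set T}) : Prop :=
  vertex_cover adj C /\
  (forall C' : {set T}, vertex_cover adj C' -> (#|C| <= #|C'|)%N).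

(* The limits satisfy the fixed-point equation Y_{u->v}(1 + inflow_{u,v}) = z,
   where inflow_{u,v} sums the messages entering u except the one from v, and
   they are nonnegative and nondecreasing in z.  The equation yields three
   growth rules for a message u->v: it is o(z) if another message entering u
   is unbounded, it grows linearly if all other messages entering u are
   bounded, and it is bounded if another message entering u grows linearly.
   Cover: a vertex u of U outside V only receives bounded messages, so each
   neighbour w of u has two neighbours v with P_G(I)_{v->w} = 1 (u and, by the
   growth rules, some other one), i.e. w is in V.
   Minimality: for z > 0 the shares Y_{y->x}/(1 + sum_v Y_{v->x}), put on the
   edges {x, y} with x in U, are the same from both endpoints and form a
   fractional matching, so their mass is at most |C| for every cover C (weak
   duality), while the growth rules give mass >= |V| (1 - eps) for large z. *)

From HB Require Import structures.
From mathcomp Require Import all_boot.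
From Stdlib Require Import Reals Lra Classical.

Set Implicit Arguments.
Unset Strict Implicit.

HB.instance Definition _ := Monoid.isComLaw.Build R 0%R Rplus
  (fun a b c => esym (Rplus_assoc a b c)) Rplus_comm Rplus_0_l.

Open Scope R_scope.

Lemma sum_ge0 (T : finType) (P : pred T) (f : T -> R) :
  (forall x, P x -> 0 <= f x) -> 0 <= \big[Rplus/0]_(x | P x) f x.
Proof. by move=> Hf; apply: (big_ind (fun s => 0 <= s)) => // [|a b]; lra. Qed.

Lemma sum_le (T : finType) (P : pred T) (f g : T -> R) :
  (forall x, P x -> f x <= g x) ->
  \big[Rplus/0]_(x | P x) f x <= \big[Rplus/0]_(x | P x) g x.
Proof. by move=> Hfg; apply: (big_ind2 (fun s t => s <= t)) => // [|a b c d]; lra. Qed.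

Lemma sum_mulr (A : Type) (r : seq A) (P : pred A) (f : A -> R) (c : R) :
  \big[Rplus/0]_(x <- r | P x) (f x * c) = (\big[Rplus/0]_(x <- r | P x) f x) * c.
Proof.
by rewrite (big_morph (fun s => s * c) (fun a b => Rmult_plus_distr_r a b c)
  (Rmult_0_l c)).
Qed.

Lemma term_le_sum (T : finType) (P : pred T) (f : T -> R) (x : T) :
  P x -> (forall y, P y -> 0 <= f y) -> f x <= \big[Rplus/0]_(y | P y) f y.
Proof.
move=> Px Hf; rewrite (bigD1 x) //=.
have : 0 <= \big[Rplus/0]_(y | P y && (y != x)) f y by apply: sum_ge0 => y /andP[/Hf].
lra.
Qed.

Lemma sum_filter_le (T : finType) (P : pred T) (f : T -> R) :
  (forall x, 0 <= f x) -> \big[Rplus/0]_(x | P x) f x <= \big[Rplus/0]_x f x.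
Proof.
move=> Hf; rewrite [X in _ <= X](bigID P) /=.
have : 0 <= \big[Rplus/0]_(x | ~~ P x) f x by apply: sum_ge0.
lra.
Qed.

Lemma sum_const_card (T : finType) (A : {pred T}) (c : R) :
  \big[Rplus/0]_(x in A) c = INR #|A| * c.
Proof. by rewrite big_const; elim: #|A| => [|n IH]; rewrite ?S_INR /= ?IH; ring. Qed.

Lemma sum_le_card (T : finType) (P : pred T) (f : T -> R) (c : R) :
  (forall x, P x -> f x <= c) -> 0 <= c ->
  \big[Rplus/0]_(x | P x) f x <= INR #|T| * c.
Proof.
move=> Hf Hc; rewrite -sum_const_card big_mkcond.
by apply: sum_le => x _; case: ifP => [/Hf|].
Qed.

Lemma sum_cv (A : Type) (r : seq A) (P : pred A) (f : nat -> A -> R) (g : A -> R) :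
  (forall x, P x -> Un_cv (fun t => f t x) (g x)) ->
  Un_cv (fun t => \big[Rplus/0]_(x <- r | P x) f t x) (\big[Rplus/0]_(x <- r | P x) g x).
Proof.
move=> Hfg; elim: r => [|a r IH].
  rewrite big_nil => e He; exists 0%nat => n _.
  by rewrite big_nil /R_dist Rminus_0_r Rabs_R0.
rewrite big_cons; case: ifP => Pa.
  by apply: Un_cv_ext (CV_plus _ _ _ _ (Hfg a Pa) IH) => n; rewrite big_cons Pa.
by apply: Un_cv_ext IH => n; rewrite big_cons Pa.
Qed.

Definition eventually (P : R -> Prop) : Prop := exists z0, forall z, z0 <= z -> P z.

Lemma eventually_and (P Q : R -> Prop) :
  eventually P -> eventually Q -> eventually (fun z => P z /\ Q z).
Proof.
move=> [a Ha] [b Hb]; exists (Rmax a b) => z Hz.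
by split; [apply: Ha | apply: Hb]; move: (Rmax_l a b) (Rmax_r a b); lra.
Qed.

Lemma eventually_ge (c : R) : eventually (fun z => c <= z).
Proof. by exists c. Qed.

Lemma eventually_impl (P Q : R -> Prop) :
  eventually P -> (forall z, P z -> Q z) -> eventually Q.
Proof. by move=> [a Ha] HPQ; exists a => z /Ha /HPQ. Qed.

Lemma eventually_pos_witness (P : R -> Prop) : eventually P -> exists z, 0 < z /\ P z.
Proof.
by move=> [a Ha]; exists (Rmax a 1); split; [move: (Rmax_r a 1) | apply/Ha/Rmax_l]; lra.
Qed.

Lemma tends_to_infty_ge (f : R -> R) (M : R) :
  tends_to_infty f -> eventually (fun z => M <= f z).
Proof. exact. Qed.

Lemma fin_uniform (T : finType) (Q : T -> R -> Prop) :
  (forall x M M', Q x M -> M <= M' -> Q x M') ->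
  (forall x, exists M, Q x M) -> exists M, forall x, Q x M.
Proof.
move=> Hup Hex.
suff [M HM] : exists M, forall x, x \in index_enum T -> Q x M.
  by exists M => x; apply/HM/mem_index_enum.
elim: (index_enum T) => [|a r [M HM]]; first by exists 0.
have [Ma HMa] := Hex a; exists (Rmax M Ma) => x; rewrite in_cons => /orP[/eqP->|xr].
  exact: Hup HMa (Rmax_r _ _).
exact: Hup (HM x xr) (Rmax_l _ _).
Qed.

Lemma eventually_forall_in (T : finType) (P : pred T) (Q : T -> R -> Prop) :
  (forall x, P x -> eventually (Q x)) -> eventually (fun z => forall x, P x -> Q x z).
Proof.
move=> HQ.
have [M HM] : exists M, forall x z, M <= z -> P x -> Q x z.
  apply: fin_uniform => [x M M' HM HMM' z Hz|x].
    exact: HM (Rle_trans _ _ _ HMM' Hz).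
  case Px: (P x); last by exists 0.
  by have [M HM] := HQ x Px; exists M => z /HM.
by exists M => z Hz x /(HM x z Hz).
Qed.

Definition bounded (f : R -> R) : Prop := exists M, forall z, 0 < z -> f z <= M.

Lemma bounded_not_tends (f : R -> R) : bounded f -> ~ tends_to_infty f.
Proof.
move=> [M HM] /(tends_to_infty_ge (M + 1)) /eventually_pos_witness [z [Hz Hlarge]].
by have := HM z Hz; lra.
Qed.

Lemma bounded_forall_in (T : finType) (P : pred T) (f : T -> R -> R) :
  (forall x, P x -> bounded (f x)) ->
  exists M, forall x, P x -> forall z, 0 < z -> f x z <= M.
Proof.
move=> Hf; apply: fin_uniform => [x M M' HM HMM' Px z Hz|x].
  exact: Rle_trans (HM Px z Hz) HMM'.
case Px: (P x); last by exists 0.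
by have [M HM] := Hf x Px; exists M.
Qed.

Lemma div_le (a b c d : R) : 0 < b -> 0 < d -> a * d <= c * b -> a / b <= c / d.
Proof.
move=> Hb Hd H; apply: (Rmult_le_reg_r (b * d)); first nra.
replace (a / b * (b * d)) with (a * d) by (field; lra).
by replace (c / d * (b * d)) with (c * b) by (field; lra).
Qed.

Lemma share_ge (eps s : R) : 0 < eps -> / eps <= s -> 1 - eps <= s / (1 + s).
Proof.
move=> He Hs; have Hes : 1 <= eps * s.
  by rewrite -(Rinv_r eps); [apply: Rmult_le_compat_l; lra | lra].
rewrite -(Rdiv_1_r (1 - eps)); apply: div_le; nra.
Qed.

Lemma share_lower (eps q a b : R) : 0 < eps -> 0 <= a -> 0 <= b ->
  2 <= eps * q -> q <= a + b -> a <= eps * q / 2 -> 1 - eps <= b / (1 + (a + b)).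
Proof.
move=> He Ha Hb Hq Hqab Hsmall.
have Hbig : eps * q <= eps * (a + b) by apply: Rmult_le_compat_l; lra.
rewrite -(Rdiv_1_r (1 - eps)); apply: div_le; lra.
Qed.

Lemma cv_div (s : nat -> R) (l z : R) :
  Un_cv s l -> 0 <= l -> Un_cv (fun n => z / (1 + s n)) (z / (1 + l)).
Proof.
move=> Hs Hl; apply: (continuity_seq (fun x => z / (1 + x))) => //.
apply: continuity_pt_div; last lra.
  exact: continuity_pt_const.
apply: continuity_pt_plus; first exact: continuity_pt_const.
exact/derivable_continuous_pt/derivable_pt_id.
Qed.

Lemma cv_shift (s : nat -> R) (l : R) : Un_cv s l -> Un_cv (fun n => s n.+1) l.
Proof.
move=> Hs e He; have [N HN] := Hs e He.
by exists N => n Hn; apply: HN; apply/leP/leqW/leP.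
Qed.

Lemma cv_ge0 (s : nat -> R) (l : R) : Un_cv s l -> (forall n, 0 <= s n) -> 0 <= l.
Proof.
move=> Hs Hpos; apply: (@Rle_cv_lim (fun _ => 0) s 0 l) => //.
by move=> e He; exists 0%nat => n _; rewrite /R_dist Rminus_diag Rabs_R0.
Qed.

(* The LABP messages are nonnegative and, for z1 <= z2, satisfy
   m(z1) <= m(z2) and m(z2)/z2 <= m(z1)/z1; the two monotonicity
   statements have to be proved simultaneously. *)
Lemma labp_mono (T : finType) (adj : rel T) (z1 z2 : R) : 0 < z1 -> z1 <= z2 ->
  forall t u v, [/\ 0 <= labp adj z1 t u v, labp adj z1 t u v <= labp adj z2 t u v
                  & labp adj z2 t u v * z1 <= labp adj z1 t u v * z2].
Proof.
move=> H1 H12; elim=> [|t IH] u v /=; first by split; lra.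
set s1 := \big[Rplus/0]_(w | _) labp adj z1 t w u.
set s2 := \big[Rplus/0]_(w | _) labp adj z2 t w u.
have s1_ge0 : 0 <= s1 by apply: sum_ge0 => w _; case: (IH w u).
have s12 : s1 <= s2 by apply: sum_le => w _; case: (IH w u).
have s21 : s2 * z1 <= s1 * z2.
  by rewrite /s1 /s2 -!sum_mulr; apply: sum_le => w _; case: (IH w u).
split.
- by apply: Rmult_le_pos; [lra | apply/Rlt_le/Rinv_0_lt_compat; lra].
- by apply: div_le; lra.
- replace (z2 / (1 + s2) * z1) with ((z2 * z1) / (1 + s2)) by (field; lra).
  replace (z1 / (1 + s1) * z2) with ((z1 * z2) / (1 + s1)) by (field; lra).
  have z12_ge0 : 0 <= z1 * z2 by nra.
  have s12z := Rmult_le_compat_l _ _ _ z12_ge0 s12.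
  apply: div_le; lra.
Qed.

Section FixedPoint.

Variables (T : finType) (adj : rel T) (Y : R -> T -> T -> R).
Hypothesis HY : forall z : R, 0 < z -> forall u v : T, adj u v ->
  Un_cv (fun t => labp adj z t u v) (Y z u v).

Definition inflow (z : R) (u v : T) : R :=
  \big[Rplus/0]_(w | adj w u && (w != v)) Y z w u.
Definition total_inflow (z : R) (x : T) : R :=
  \big[Rplus/0]_(v | adj v x) Y z v x.

Lemma Y_ge0 (z : R) (u v : T) : 0 < z -> adj u v -> 0 <= Y z u v.
Proof.
move=> Hz Huv; apply: (cv_ge0 (HY Hz Huv)) => t.
by case: (labp_mono adj Hz (Rle_refl z) t u v).
Qed.

Lemma Y_mono (z1 z2 : R) (u v : T) :
  0 < z1 -> z1 <= z2 -> adj u v -> Y z1 u v <= Y z2 u v.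
Proof.
move=> H1 H12 Huv.
apply: (Rle_cv_lim _ (HY H1 Huv) (HY (Rlt_le_trans _ _ _ H1 H12) Huv)) => t.
by case: (labp_mono adj H1 H12 t u v).
Qed.

Lemma inflow_ge0 (z : R) (u v : T) : 0 < z -> 0 <= inflow z u v.
Proof. by move=> Hz; apply: sum_ge0 => w /andP[Hwu _]; apply: Y_ge0. Qed.

Lemma total_inflow_ge0 (z : R) (x : T) : 0 < z -> 0 <= total_inflow z x.
Proof. by move=> Hz; apply: sum_ge0 => v; apply: Y_ge0. Qed.

Lemma Y_fixed_point (z : R) (u v : T) :
  0 < z -> adj u v -> Y z u v = z / (1 + inflow z u v).
Proof.
move=> Hz Huv; apply: UL_sequence (cv_shift (HY Hz Huv)) _.
apply: cv_div; last exact: inflow_ge0.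
by apply: sum_cv => w /andP[Hwu _]; apply: HY.
Qed.

Lemma Y_mul_inflow (z : R) (u v : T) :
  0 < z -> adj u v -> Y z u v * (1 + inflow z u v) = z.
Proof.
move=> Hz Huv; rewrite (Y_fixed_point Hz Huv).
by field; have := inflow_ge0 u v Hz; lra.
Qed.

Lemma Y_mul_incoming_le (z : R) (u v w : T) :
  0 < z -> adj u v -> adj w u -> w != v -> Y z u v * (1 + Y z w u) <= z.
Proof.
move=> Hz Huv Hwu Hwv.
have Hin : Y z w u <= inflow z u v.
  apply: (term_le_sum (P := fun y => adj y u && (y != v))); first by rewrite Hwu.
  by move=> y /andP[Hyu _]; apply: Y_ge0.
have := Y_mul_inflow Hz Huv; have := Y_ge0 Hz Huv.
nra.
Qed.

Lemma Y_sublinear (u v w : T) : adj u v -> adj w u -> w != v ->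
  tends_to_infty (fun z => Y z w u) ->
  forall d, 0 < d -> eventually (fun z => Y z u v <= d * z).
Proof.
move=> Huv Hwu Hwv Hw d Hd.
apply: (eventually_impl (eventually_and (tends_to_infty_ge (/ d) Hw) (eventually_ge 1))).
move=> z [Hlarge Hz1].
have Hz : 0 < z by lra.
have HY0 := Y_ge0 Hz Huv.
have Hratio : Y z u v <= d * (Y z u v * Y z w u).
  replace (Y z u v) with (d * (Y z u v * / d)) at 1 by (field; lra).
  by apply: Rmult_le_compat_l; [lra | apply: Rmult_le_compat_l].
have := Y_mul_incoming_le Hz Huv Hwu Hwv.
nra.
Qed.

Lemma Y_linear (u v : T) : adj u v ->
  (forall w, adj w u && (w != v) -> bounded (fun z => Y z w u)) ->
  exists K, 0 <= K /\ forall z, 0 < z -> z / (1 + K) <= Y z u v.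
Proof.
move=> Huv Hbd; have [M HM] := bounded_forall_in Hbd.
have HK : 0 <= INR #|T| * Rmax M 0 by apply: Rmult_le_pos; [apply: pos_INR | apply: Rmax_r].
exists (INR #|T| * Rmax M 0); split=> // z Hz.
have Hin : inflow z u v <= INR #|T| * Rmax M 0.
  apply: sum_le_card; last exact: Rmax_r.
  by move=> w Hw; apply: Rle_trans (HM w Hw z Hz) (Rmax_l _ _).
have := inflow_ge0 u v Hz; rewrite (Y_fixed_point Hz Huv) => Hin0.
by apply: div_le; nra.
Qed.

Lemma Y_bounded_of_linear (u v w : T) (K : R) : adj u v -> adj w u -> w != v -> 0 <= K ->
  (forall z, 0 < z -> z / (1 + K) <= Y z w u) -> bounded (fun z => Y z u v).
Proof.
move=> Huv Hwu Hwv HK Hlin; exists (1 + K) => z Hz.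
have := Y_mul_incoming_le Hz Huv Hwu Hwv; have := Hlin z Hz; have := Y_ge0 Hz Huv.
have Hq : z / (1 + K) * (1 + K) = z by field; lra.
have Hq0 : 0 < z / (1 + K) by apply: Rdiv_lt_0_compat; lra.
nra.
Qed.

Lemma Y_unbounded_of_sublinear (u v : T) : adj u v ->
  (forall w, adj w u && (w != v) ->
     forall d, 0 < d -> eventually (fun z => Y z w u <= d * z)) ->
  tends_to_infty (fun z => Y z u v).
Proof.
move=> Huv Hsub M; set M' := Rmax M 1; set N := INR #|T|.
have HM1 : 1 <= M' by apply: Rmax_r.
have HN : 0 <= N by apply: pos_INR.
set d := / (2 * (N + 1) * M').
have Hd : 0 < d by apply: Rinv_0_lt_compat; nra.
have HNd : M' * (N * d) <= / 2.
  have -> : M' * (N * d) = / 2 * (N / (N + 1)) by rewrite /d; field; lra.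
  have : N / (N + 1) <= 1 by rewrite -(Rdiv_1_r 1); apply: div_le; lra.
  lra.
have Hev := eventually_forall_in (fun w Hw => Hsub w Hw d Hd).
apply: (eventually_impl (eventually_and Hev (eventually_ge (2 * M')))).
move=> z [Hsmall Hz2].
have Hz : 0 < z by lra.
have Hin : inflow z u v <= N * (d * z) by apply: sum_le_card => //; nra.
have Hin0 := inflow_ge0 u v Hz.
have Hfix := Y_mul_inflow Hz Huv.
suff : M' <= Y z u v by move: (Rmax_l M 1); rewrite -/M'; lra.
(* Otherwise z = Y (1 + inflow) < M' (1 + inflow) <= M' + z/2 <= z. *)
apply: Rnot_lt_le => HY_small.
have Hfix_lt : z < M' * (1 + inflow z u v).
  by rewrite -{1}Hfix; apply: Rmult_lt_compat_r; lra.
have Hin_scaled : M' * inflow z u v <= M' * (N * d) * z.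
  replace (M' * (N * d) * z) with (M' * (N * (d * z))) by ring.
  by apply: Rmult_le_compat_l; lra.
have Hhalf : M' * (N * d) * z <= / 2 * z by apply: Rmult_le_compat_r; lra.
lra.
Qed.

(* Monotonicity turns "not unbounded" into "bounded". *)
Lemma Y_bounded_of_not_tends (u v : T) : adj u v ->
  ~ tends_to_infty (fun z => Y z u v) -> bounded (fun z => Y z u v).
Proof.
move=> Huv /not_all_ex_not [M HM]; exists M => z Hz.
have /not_all_ex_not [z' Hz'] := not_ex_all_not _ _ HM z.
have [Hzz' HY'] := imply_to_and _ _ Hz'.
have := Y_mono Hz Hzz' Huv; have := Rnot_le_lt _ _ HY'; lra.
Qed.

Lemma total_inflow_split (z : R) (x y : T) :
  adj y x -> total_inflow z x = Y z y x + inflow z x y.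
Proof. by move=> Hyx; rewrite /total_inflow (bigD1 y). Qed.

(* The share of an edge {x, y} is the same seen from both endpoints: with
   a = inflow_{x,y} and b = inflow_{y,x}, both sides equal z/((1+a)(1+b) + z). *)
Lemma share_sym (z : R) (x y : T) : 0 < z -> adj x y -> adj y x ->
  Y z y x / (1 + total_inflow z x) = Y z x y / (1 + total_inflow z y).
Proof.
move=> Hz Hxy Hyx.
rewrite (total_inflow_split z Hyx) (total_inflow_split z Hxy).
rewrite (Y_fixed_point Hz Hxy) (Y_fixed_point Hz Hyx).
have := inflow_ge0 x y Hz; have := inflow_ge0 y x Hz.
set a := inflow z x y; set b := inflow z y x => Hb Ha.
have -> : z / (1 + b) / (1 + (z / (1 + b) + a)) = z / ((1 + a) * (1 + b) + z).
  by field; split; nra.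
by field; split; nra.
Qed.

End FixedPoint.

Section FractionalMatching.

Variables (T : finType) (a : T -> T -> R).
Hypothesis a_ge0 : forall x y, 0 <= a x y.

Definition mass : R := \big[Rplus/0]_x \big[Rplus/0]_y a x y.
Definition load (x : T) : R := \big[Rplus/0]_y a x y + \big[Rplus/0]_y a y x.

Lemma mass_le_cover (C : {set T}) :
  (forall x y, x \notin C -> y \notin C -> a x y = 0) ->
  (forall x, x \in C -> load x <= 1) -> mass <= INR #|C|.
Proof.
move=> Hsupp Hload.
have Hrow x : \big[Rplus/0]_y a x y <=
    (if x \in C then \big[Rplus/0]_y a x y else 0) + \big[Rplus/0]_(y in C) a x y.
  case: ifP => HxC.
    have : 0 <= \big[Rplus/0]_(y in C) a x y by apply: sum_ge0.
    lra.
  rewrite [X in X <= _](bigID (mem C)) /= [X in _ + X]big1; first lra.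
  by move=> y HyC; apply: Hsupp; rewrite ?HxC.
rewrite /mass; apply: (Rle_trans _ _ _ (sum_le (fun x _ => Hrow x))).
rewrite big_split /= -big_mkcond [X in _ + X]exchange_big -big_split /=.
by rewrite -[INR _]Rmult_1_r -sum_const_card; apply: sum_le.
Qed.

Lemma mass_ge_packing (D : {set T}) (c : R) :
  (forall x, x \in D ->
     c <= \big[Rplus/0]_y a x y + \big[Rplus/0]_(y | y \notin D) a y x) ->
  INR #|D| * c <= mass.
Proof.
move=> Hc.
have Hout : \big[Rplus/0]_(x in D) \big[Rplus/0]_(y | y \notin D) a y x
            <= \big[Rplus/0]_(x | x \notin D) \big[Rplus/0]_y a x y.
  by rewrite exchange_big; apply: sum_le => y _; apply: sum_filter_le.
rewrite /mass (bigID (mem D)) /= -sum_const_card.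
apply: (Rle_trans _ _ _ (sum_le Hc)).
rewrite big_split /=; lra.
Qed.

End FractionalMatching.

Section MinimumCover.

Variables (T : finType) (adj : rel T) (inU : pred T).
Hypothesis Hsym : symmetric adj.
Hypothesis Hbip : forall x y : T, adj x y -> inU x != inU y.
Variable Y : R -> T -> T -> R.
Hypothesis HY : forall z : R, 0 < z -> forall u v : T, adj u v ->
  Un_cv (fun t => labp adj z t u v) (Y z u v).
Variable I : T -> T -> bool.
Hypothesis HI : forall u v : T, adj u v ->
  (I u v = true <-> tends_to_infty (fun z => Y z u v)).

Local Notation V := (Vset adj inU I).

Lemma other_side (x y : T) : adj x y -> inU y = ~~ inU x.
Proof. by move/Hbip; case: (inU x); case: (inU y). Qed.

Lemma I_tends (u v : T) : adj u v -> I u v -> tends_to_infty (fun z => Y z u v).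
Proof. by move=> Huv /(HI Huv). Qed.

Lemma I_false_bounded (u v : T) : adj u v -> I u v = false -> bounded (fun z => Y z u v).
Proof.
move=> Huv HIuv; apply: (Y_bounded_of_not_tends HY Huv).
by move/(HI Huv); rewrite HIuv.
Qed.

Lemma bounded_I_false (u v : T) : adj u v -> bounded (fun z => Y z u v) -> I u v = false.
Proof.
move=> Huv /bounded_not_tends Hnt; apply: negbTE; apply/negP => HIuv.
exact/Hnt/I_tends.
Qed.

Lemma PGP (v w : T) :
  reflect (forall x, adj x v -> x != w -> I x v = false) (PG adj I v w).
Proof.
rewrite /PG sum_nat_eq0; apply: (iffP forallP) => H x.
  by move=> Hxv Hxw; move: (H x); rewrite Hxv Hxw /=; case: (I x v).
by apply/implyP => /andP[Hxv Hxw]; rewrite H.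
Qed.

Lemma PG_false_witness (v w : T) :
  PG adj I v w = false -> exists x, [/\ adj x v, x != w & I x v].
Proof.
move=> /negbT /PGP Hneg; apply: NNPP => Hno; apply: Hneg => x Hxv Hxw.
by apply: negbTE; apply/negP => HIx; apply: Hno; exists x.
Qed.

Lemma sum_bool_card (P b : pred T) :
  (\sum_(v | P v) (b v : nat) = #|[pred v | P v && b v]|)%nat.
Proof.
rewrite -sum1_card [RHS]big_mkcond [LHS]big_mkcond; apply: eq_bigr => v _ /=.
by rewrite !inE; case: (P v); case: (b v).
Qed.

Lemma inV_U (x : T) : inU x -> (x \in V) = [exists v, adj v x && I v x].
Proof.
move=> Hx; rewrite inE Hx sum_bool_card; apply/idP/existsP.
  by case/card_gt0P => v; rewrite inE; exists v.
by move=> [v Hv]; apply/card_gt0P; exists v; rewrite inE.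
Qed.

Lemma inV_W (x : T) : ~~ inU x ->
  (x \in V) = (1 < #|[pred v | adj v x && PG adj I v x]|)%nat.
Proof. by move=> Hx; rewrite inE (negbTE Hx) sum_bool_card. Qed.

Lemma outside_V_silent (u : T) : inU u -> u \notin V -> forall v, adj v u -> I v u = false.
Proof.
move=> Hu; rewrite (inV_U Hu) negb_exists => /forallP Hno v Hvu.
by move: (Hno v); rewrite Hvu /= => /negbTE.
Qed.

(* If Y_{w->u} is finite, some neighbour v != u of w has P_G(I)_{v->w} = 1:
   otherwise every message into w other than u's would be o(z), which forces
   Y_{w->u} to be infinite. *)
Lemma other_PG_neighbour (w u : T) : adj w u -> I w u = false ->
  exists v, [/\ v != u, adj v w & PG adj I v w].
Proof.
move=> Hwu HIwu; apply: NNPP => Hno.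
have Hsub : forall v, adj v w && (v != u) ->
    forall d, 0 < d -> eventually (fun z => Y z v w <= d * z).
  move=> v /andP[Hvw Hvu]; case HPG: (PG adj I v w).
    by case: Hno; exists v.
  have [x [Hxv Hxw HIx]] := PG_false_witness HPG.
  exact: (Y_sublinear HY Hvw Hxv Hxw (I_tends Hxv HIx)).
by move: HIwu; rewrite (proj2 (HI Hwu) (Y_unbounded_of_sublinear HY Hwu Hsub)).
Qed.

Lemma neighbour_in_V (u w : T) : inU u -> adj u w -> u \notin V -> w \in V.
Proof.
move=> Hu Huw HuV; have Hwu : adj w u by rewrite Hsym.
have Hsilent := outside_V_silent Hu HuV.
have HPGu : PG adj I u w by apply/PGP => x Hxu _; apply: Hsilent.
have [v [Hvu Hvw HPGv]] := other_PG_neighbour Hwu (Hsilent w Hwu).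
rewrite inV_W; last by rewrite (other_side Huw) Hu.
by apply/card_gt1P; exists u, v; rewrite !inE Huw HPGu Hvw HPGv eq_sym.
Qed.

Lemma V_cover : vertex_cover adj V.
Proof.
move=> x y Hxy; case HxV: (x \in V) => //=.
case Hx: (inU x); first by apply: (neighbour_in_V Hx Hxy); rewrite HxV.
have Hy : inU y by rewrite (other_side Hxy) Hx.
by apply: contraT => HyV; rewrite -HxV (neighbour_in_V Hy _ HyV) // Hsym.
Qed.

Local Notation S := (total_inflow adj Y).

(* The fractional matching: the edge {x, y} with x in U carries the share
   Y_{y->x}/(1 + S_x) of the messages entering x. *)
Definition weight (z : R) (x y : T) : R :=
  if inU x && adj y x then Y z y x / (1 + S z x) else 0.

Lemma share_ge0 (z : R) (x y : T) : 0 < z -> adj y x -> 0 <= Y z y x / (1 + S z x).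
Proof.
move=> Hz Hyx; have := total_inflow_ge0 HY x Hz; have := Y_ge0 HY Hz Hyx.
by move=> ? ?; apply: Rle_mult_inv_pos; lra.
Qed.

Lemma weight_ge0 (z : R) (x y : T) : 0 < z -> 0 <= weight z x y.
Proof. by move=> Hz; rewrite /weight; case: ifP => [/andP[_ /(share_ge0 Hz)] | _] //; lra. Qed.

Lemma weight_from_W (z : R) (x y : T) : 0 < z -> ~~ inU x ->
  weight z y x = if adj y x then Y z y x / (1 + S z x) else 0.
Proof.
move=> Hz Hx; rewrite /weight Hsym; case Hyx: (adj y x); last by rewrite andbF.
have Hxy : adj x y by rewrite Hsym.
by rewrite (other_side Hxy) Hx /= (share_sym HY Hz Hxy Hyx).
Qed.

Lemma row_weight (z : R) (x : T) :
  \big[Rplus/0]_y weight z x y = if inU x then S z x / (1 + S z x) else 0.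
Proof.
rewrite /weight; case Hx: (inU x); last by rewrite big1.
rewrite /Rdiv [X in _ = X * _]/total_inflow -sum_mulr [RHS]big_mkcond.
by apply: eq_bigr.
Qed.

Lemma col_weight (z : R) (x : T) (P : pred T) : 0 < z ->
  \big[Rplus/0]_(y | P y) weight z y x =
  if inU x then 0 else (\big[Rplus/0]_(y | adj y x && P y) Y z y x) / (1 + S z x).
Proof.
move=> Hz; case Hx: (inU x).
  apply: big1 => y _; rewrite /weight; case Hxy: (adj x y); rewrite ?andbF //.
  by rewrite (other_side Hxy) Hx.
rewrite /Rdiv -sum_mulr big_mkcond [RHS]big_mkcond; apply: eq_bigr => y _.
by rewrite (weight_from_W _ Hz) ?Hx //; case: (P y); case: (adj y x).
Qed.

Lemma load_weight_le1 (z : R) (x : T) : 0 < z -> load (weight z) x <= 1.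
Proof.
move=> Hz; have HS := total_inflow_ge0 HY x Hz.
have Hshare : S z x / (1 + S z x) <= 1 by rewrite -(Rdiv_1_r 1); apply: div_le; lra.
rewrite /load row_weight (col_weight _ xpredT Hz); case: (inU x); first lra.
by rewrite Rplus_0_l (eq_bigl (fun y => adj y x)) // => y; rewrite andbT.
Qed.

(* Only edges carry weight, so every weighted pair meets a vertex cover. *)
Lemma weight_supported (z : R) (C : {set T}) : vertex_cover adj C ->
  forall x y, x \notin C -> y \notin C -> weight z x y = 0.
Proof.
move=> HC x y HxC HyC; rewrite /weight; case Hyx: (adj y x); last by rewrite andbF.
by move: (HC y x Hyx); rewrite (negbTE HxC) (negbTE HyC).
Qed.

(* A vertex of U in V receives an infinite message, so its load tends to 1. *)
Lemma load_U (x : T) (eps : R) : inU x -> x \in V -> 0 < eps ->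
  eventually (fun z => 1 - eps <= S z x / (1 + S z x)).
Proof.
move=> Hx; rewrite (inV_U Hx) => /existsP[v /andP[Hvx HIvx]] He.
apply: (eventually_impl (eventually_and
  (tends_to_infty_ge (/ eps) (I_tends Hvx HIvx)) (eventually_ge 1))) => z [Hlarge Hz1].
apply: share_ge => //; apply: Rle_trans Hlarge _.
apply: (term_le_sum (P := fun y => adj y x)) => // y Hyx; apply: (Y_ge0 HY _ Hyx); lra.
Qed.

(* A vertex w of W in V receives linearly growing messages from two distinct
   neighbours; equivalently, from a neighbour different from any given y. *)
Lemma linear_into_W (w : T) : ~~ inU w -> w \in V ->
  exists K, 0 <= K /\ forall y, exists v,
    [/\ adj v w, v != y & forall z, 0 < z -> z / (1 + K) <= Y z v w].
Proof.
move=> Hw; rewrite (inV_W Hw) => /card_gt1P[v1 [v2 []]].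
rewrite !inE => /andP[Hv1 HPG1] /andP[Hv2 HPG2] Hv12.
have Hlin v : adj v w -> PG adj I v w ->
    exists K, 0 <= K /\ forall z, 0 < z -> z / (1 + K) <= Y z v w.
  move=> Hvw /PGP Hsilent; apply: (Y_linear HY Hvw) => x /andP[Hxv Hxw].
  exact/(I_false_bounded Hxv)/Hsilent.
have [K1 [HK1 Hlin1]] := Hlin v1 Hv1 HPG1.
have [K2 [HK2 Hlin2]] := Hlin v2 Hv2 HPG2.
have HK : 0 <= Rmax K1 K2 by apply: Rle_trans (Rmax_l _ _).
have Hweak K v : 0 <= K -> K <= Rmax K1 K2 ->
    (forall z, 0 < z -> z / (1 + K) <= Y z v w) ->
    forall z, 0 < z -> z / (1 + Rmax K1 K2) <= Y z v w.
  move=> HK0 HKmax HlinK z Hz; apply: Rle_trans (HlinK z Hz).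
  by apply: div_le; nra.
exists (Rmax K1 K2); split=> // y; case: (eqVneq v1 y) => [<- | Hv1y].
  by exists v2; split; rewrite 1?eq_sym //; apply: Hweak (Rmax_r _ _) Hlin2.
by exists v1; split=> //; apply: Hweak (Rmax_l _ _) Hlin1.
Qed.

(* A neighbour y in V of such a w receives an infinite message, not from w
   (Y_{w->y} is bounded since w receives a linear message from some v != y);
   hence Y_{y->w}(z) = o(z). *)
Lemma sublinear_into_W (w y : T) : ~~ inU w -> w \in V -> adj y w -> y \in V ->
  forall d, 0 < d -> eventually (fun z => Y z y w <= d * z).
Proof.
move=> Hw HwV Hyw; rewrite inV_U; last by rewrite (other_side (_ : adj w y)) ?Hw // Hsym.
move=> /existsP[x /andP[Hxy HIxy]].
have Hxw : x != w.
  apply/eqP => Exw; move: Hxy HIxy; rewrite Exw => Hwy HIwy.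
  have [K [HK Hlin]] := linear_into_W Hw HwV; have [v [Hvw Hvy Hv]] := Hlin y.
  by rewrite (bounded_I_false Hwy (Y_bounded_of_linear HY Hwy Hvw Hvy HK Hv)) in HIwy.
exact: (Y_sublinear HY Hyw Hxy Hxw (I_tends Hxy HIxy)).
Qed.

Lemma load_W (w : T) (eps : R) : ~~ inU w -> w \in V -> 0 < eps ->
  eventually (fun z =>
    1 - eps <= (\big[Rplus/0]_(y | adj y w && (y \notin V)) Y z y w) / (1 + S z w)).
Proof.
move=> Hw HwV He.
have [K [HK Hlin]] := linear_into_W Hw HwV; have [v [Hvw _ Hv]] := Hlin w.
set N := INR #|T|; have HN : 0 <= N by apply: pos_INR.
set d := eps / (2 * (N + 1) * (1 + K)).
have Hd : 0 < d by apply: Rdiv_lt_0_compat; nra.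
have Hsmall := eventually_forall_in (P := fun y => adj y w && (y \in V))
  (fun y Hy => sublinear_into_W Hw HwV (proj1 (andP Hy)) (proj2 (andP Hy)) Hd).
apply: (eventually_impl (eventually_and Hsmall
  (eventually_ge (2 * (1 + K) / eps)))) => z [Hsub Hzlarge].
have Hz : 0 < z by apply: Rlt_le_trans Hzlarge; apply: Rdiv_lt_0_compat; lra.
set Sin := \big[Rplus/0]_(y | adj y w && (y \in V)) Y z y w.
set Sout := \big[Rplus/0]_(y | adj y w && (y \notin V)) Y z y w.
have Hsplit : S z w = Sin + Sout by rewrite /total_inflow (bigID (mem V)).
have HSin0 : 0 <= Sin by apply: sum_ge0 => y /andP[Hyw _]; apply: (Y_ge0 HY).
have HSout0 : 0 <= Sout by apply: sum_ge0 => y /andP[Hyw _]; apply: (Y_ge0 HY).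
set q := z / (1 + K).
have Hqz : q * (1 + K) = z by rewrite /q; field; lra.
have Hq : q <= Sin + Sout.
  rewrite -Hsplit; apply: Rle_trans (Hv z Hz) _.
  by apply: (term_le_sum (P := fun y => adj y w)) => // y Hyw; apply: (Y_ge0 HY).
have Hepsq : 2 <= eps * q.
  have := Rmult_le_compat_l eps _ _ (Rlt_le _ _ He) Hzlarge.
  replace (eps * (2 * (1 + K) / eps)) with (2 * (1 + K)) by (field; lra).
  rewrite -Hqz; nra.
have HSin : Sin <= eps * q / 2.
  apply: Rle_trans (sum_le_card Hsub _) _; first nra.
  have -> : N * (d * z) = N / (N + 1) * (eps * q / 2) by rewrite /d -Hqz; field; lra.
  have : N / (N + 1) <= 1 by rewrite -(Rdiv_1_r 1); apply: div_le; lra.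
  nra.
by rewrite Hsplit; apply: (share_lower He HSin0 HSout0 Hepsq Hq HSin).
Qed.

Lemma packing_load (x : T) (eps : R) : x \in V -> 0 < eps ->
  eventually (fun z => 1 - eps <=
    \big[Rplus/0]_y weight z x y + \big[Rplus/0]_(y | y \notin V) weight z y x).
Proof.
move=> HxV He; case Hx: (inU x).
  apply: (eventually_impl (eventually_and (load_U Hx HxV He) (eventually_ge 1))).
  move=> z [Hload Hz1]; have Hz : 0 < z by lra.
  have Hcol := sum_ge0 (P := fun y => y \notin V) (fun y _ => weight_ge0 y x Hz).
  by rewrite row_weight Hx; lra.
apply: (eventually_impl (eventually_and (load_W (negbT Hx) HxV He) (eventually_ge 1))).
move=> z [Hload Hz1]; have Hz : 0 < z by lra.
by rewrite row_weight (col_weight _ _ Hz) Hx Rplus_0_l.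
Qed.

(* Weak duality against the fractional matching at a large z: for every
   cover C, |V| (1 - eps) <= mass <= |C|, with eps < 1/|V|. *)
Lemma V_le_cover (C : {set T}) : vertex_cover adj C -> (#|V| <= #|C|)%nat.
Proof.
move=> HC; set n := INR #|V|; have Hn : 0 <= n by apply: pos_INR.
set eps := / (n + 1); have He : 0 < eps by apply: Rinv_0_lt_compat; lra.
have [z [Hz Hpack]] := eventually_pos_witness
  (eventually_forall_in (P := mem V) (fun x Hx => packing_load Hx He)).
have Hlow := mass_ge_packing (fun x y => weight_ge0 x y Hz) Hpack.
have Hup := mass_le_cover (fun x y => weight_ge0 x y Hz) (weight_supported z HC)
  (fun x _ => load_weight_le1 x Hz).
have Hgap : n - 1 < n * (1 - eps).
  have -> : n * (1 - eps) = n - n / (n + 1) by rewrite /eps; field; lra.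
  suff : n / (n + 1) < 1 by lra.
  apply: (Rmult_lt_reg_r (n + 1)); first lra.
  by replace (n / (n + 1) * (n + 1)) with n by (field; lra); lra.
rewrite -/n in Hlow; rewrite leqNgt; apply/negP => /leP /le_INR.
by rewrite S_INR -/n => HCV; lra.
Qed.

End MinimumCover.

Theorem proposition2 (T : finType) (adj : rel T) (inU : pred T)
  (Hsym : symmetric adj)
  (Hbip : forall x y : T, adj x y -> inU x != inU y)
  (Y : R -> T -> T -> R)
  (HY : forall z : R, (0 < z)%R -> forall u v : T, adj u v ->
          Un_cv (fun t => labp adj z t u v) (Y z u v))
  (I : T -> T -> bool)
  (HI : forall u v : T, adj u v ->
          (I u v = true <-> tends_to_infty (fun z => Y z u v))) :
  min_vertex_cover adj (Vset adj inU I).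
Proof.
split; first exact: (V_cover Hsym Hbip HY HI).
by move=> C; apply: (V_le_cover Hsym Hbip HY HI).
Qed.
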